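(* Let $p$ be a prime, let $\mathcal{F}$ be a saturated fusion system on a finite $p$-group $S$, and let $\Omega$ be a finite $(S,S)$-biset which is $\mathcal{F}$-stable and $\mathcal{F}$-generated and which contains the $(S,S)$-biset $S$ (with $S$ acting on itself by left and right multiplication) as a sub-biset. Consider the square matrix \[ \bigl( |P\backslash \Omega /Q| \bigr)_{P,Q}, \] whose rows and columns are indexed by the $\mathcal{F}$-conjugacy classes of subgroups of $S$ and whose $(P,Q)$-entry is the number of $(P,Q)$-orbits of $\Omega$. Then the rank of this matrix (over $\mathbb{Q}$) is equal to the number of $\mathcal{F}$-conjugacy classes of cyclic subgroups of $S$.
   Context: A saturated fusion system $\mathcal{F}$ on $S$ is a category whose objects are the subgroups of $S$ and whose morphisms are injective homomorphisms, containing conjugations by elements of $S$, closed under restriction and inverses, and satisfying the Broto–Levi–Oliver saturation axioms; $P,P'\leq S$ are $\mathcal{F}$-conjugate if there is an isomorphism $P\to P'$ in $\mathcal{F}$. An $(S,S)$-biset is a finite set with commuting left and right $S$-actions, viewed as a left $S\times S$-set via $(s,t)\cdot x=sxt^{-1}$; the $(P,Q)$-orbits are the orbits of $P\times Q$. A left $S$-set $X$ is $\mathcal{F}$-stable if for every $P\leq S$ and every morphism $\varphi\colon P\to S$ in $\mathcal{F}$, the $P$-sets obtained by restricting the $S$-action along the inclusion and along $\varphi$ are isomorphic; an $(S,S)$-biset is $\mathcal{F}$-stable if it is $(\mathcal{F}\times\mathcal{F})$-stable as a left $S\times S$-set. An $(S,S)$-biset is $\mathcal{F}$-generated if all isotropy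 subgroups of the left $S\times S$-action have the form $\Delta(P,\varphi)=\{(u,\varphi(u))\mid u\in P\}$ with $P\leq S$ and $\varphi\colon P\to S$ a morphism in $\mathcal{F}$. *)

From mathcomp Require Import all_boot all_order all_algebra all_fingroup all_solvable.
Set Implicit Arguments. Unset Strict Implicit. Unset Printing Implicit Defensive.
Local Open Scope group_scope.

Section FusionBisets.
Variable gT : finGroupType.
Local Notation fsys := ({set gT} -> {ffun gT -> gT} -> bool).

(** A fusion system on S is given by a boolean predicate [F P f] meaning
   "f restricted to P is a morphism P -> S of the fusion system". *)

Definition subgrp (S P : {set gT}) := group_set P && (P \subset S).

Definition fusion_system (S : {group gT})
    (F : {set gT} -> {ffun gT -> gT} -> bool) : Prop :=
  [/\
      forall P (f : {ffun gT -> gT}), F P f ->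
        [/\ subgrp S P, {in P &, {morph f : x y / x * y}},
            {in P &, injective f} & f @: P \subset S],
      forall P (f g : {ffun gT -> gT}), F P f -> {in P, f =1 g} -> F P g,
      forall P s, subgrp S P -> s \in S -> F P [ffun x => x ^ s] &
     [/\
      forall P Q (f : {ffun gT -> gT}), F P f -> subgrp P Q -> F Q f,
      forall P (f g : {ffun gT -> gT}), F P f -> F (f @: P) g -> F P [ffun x => g (f x)] &
      forall P (f g : {ffun gT -> gT}), F P f -> {in P, forall x, g (f x) = x} -> F (f @: P) g]].

Definition Fconj (F : {set gT} -> {ffun gT -> gT} -> bool) (P Q : {set gT}) :=
  [exists f : {ffun gT -> gT}, F P f && (f @: P == Q)].

Definition fully_normalized (S : {group gT}) (F : fsys) (P : {set gT}) :=
  forall Q : {set gT}, Fconj F P Q -> #|'N_S(Q)| <= #|'N_S(P)|.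

Definition fully_centralized (S : {group gT}) (F : fsys) (P : {set gT}) :=
  forall Q : {set gT}, Fconj F P Q -> #|'C_S(Q)| <= #|'C_S(P)|.

Definition AutF (F : fsys) (P : {set gT}) : {set {perm gT}} :=
  [set a in Aut P | F P [ffun x => a x]].

Definition AutS (S : {group gT}) (P : {set gT}) : {set {perm gT}} :=
  [set a in Aut P | [exists g in 'N_S(P), [forall x in P, a x == x ^ g]]].

Definition Nphi (S : {group gT}) (P : {set gT}) (f : {ffun gT -> gT}) : {set gT} :=
  [set g in 'N_S(P) |
     [exists h in 'N_S(f @: P), [forall x in P, f (x ^ g) == (f x) ^ h]]].

Definition saturated (p : nat) (S : {group gT}) (F : fsys) : Prop :=
  fusion_system S F /\
  (forall P : {group gT}, P \subset S -> fully_normalized S F P ->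
     fully_centralized S F P /\ p.-Sylow(AutF F P) (AutS S P)) /\
  (forall (P : {group gT}) f, F P f -> fully_centralized S F (f @: P) ->
     exists g : {ffun gT -> gT}, F (Nphi S P f) g /\ {in P, g =1 f}).

Definition biset (S : {group gT}) (T : finType)
    (l : gT -> T -> T) (r : T -> gT -> T) : Prop :=
  [/\ forall x, l 1 x = x,
      forall x, r x 1 = x,
      forall s s' x, s \in S -> s' \in S -> l (s * s') x = l s (l s' x),
      forall t t' x, t \in S -> t' \in S -> r x (t * t') = r (r x t) t' &
      forall s t x, s \in S -> t \in S -> r (l s x) t = l s (r x t)].

Variables (T : finType) (l : gT -> T -> T) (r : T -> gT -> T).

Definition bact (g : gT * gT) (x : T) : T := l g.1 (r x g.2^-1).

Definition pq_orbit (P Q : {set gT}) (x : T) : {set T} :=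
  [set bact (u, v) x | u in P, v in Q].

Definition n_orbits (P Q : {set gT}) : nat :=
  #|[set pq_orbit P Q x | x : T]|.

(** F-stability: for every morphism psi : R -> S x S of the product fusion
   system F x F (i.e. psi = (phi x chi) restricted to R <= P x Q with
   phi in F(P), chi in F(Q)), the R-sets obtained by restricting along the
   inclusion and along psi are isomorphic. *)
Definition Fstable (S : {group gT}) (F : fsys) : Prop :=
  forall (P Q : {group gT}) (phi chi : {ffun gT -> gT}),
    F P phi -> F Q chi ->
    forall R : {group (gT * gT)}, R \subset setX P Q ->
      exists beta : T -> T, bijective beta /\
        forall g x, g \in R ->
          beta (bact g x) = bact (phi g.1, chi g.2) (beta x).

Definition isotropy (S : {group gT}) (x : T) : {set gT * gT} :=
  [set g in setX S S | bact g x == x].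

Definition Delta (P : {set gT}) (phi : {ffun gT -> gT}) : {set gT * gT} :=
  [set (u, phi u) | u in P].

Definition Fgenerated (S : {group gT}) (F : fsys) : Prop :=
  forall x : T, exists (P : {group gT}) (phi : {ffun gT -> gT}),
    F P phi /\ isotropy S x = Delta P phi.

(** The (S,S)-biset S is a sub-biset: an injective biset map S -> T. *)
Definition contains_regular (S : {group gT}) : Prop :=
  exists iota : gT -> T, {in S &, injective iota} /\
    forall s y t, s \in S -> y \in S -> t \in S ->
      iota (s * y * t) = l s (r (iota y) t).

End FusionBisets.

Definition Fclass (gT : finGroupType) (S : {group gT}) (F : {set gT} -> {ffun gT -> gT} -> bool) (P : {set gT})
  : {set {set gT}} := [set Q : {set gT} | subgrp S Q && Fconj F P Q].

Definition Fclasses (gT : finGroupType) (S : {group gT}) (F : {set gT} -> {ffun gT -> gT} -> bool)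
  : {set {set {set gT}}} :=
  [set Fclass S F P | P in [set P : {set gT} | subgrp S P]].

Definition Fclasses_cyclic (gT : finGroupType) (S : {group gT}) (F : {set gT} -> {ffun gT -> gT} -> bool)
  : {set {set {set gT}}} :=
  [set Fclass S F P | P in [set P : {set gT} | subgrp S P && cyclic P]].

Definition class_rep (gT : finGroupType) (C : {set {set gT}}) : {set gT} :=
  odflt set0 [pick P in C].

Definition orbit_matrix (gT : finGroupType) (S : {group gT}) (F : {set gT} -> {ffun gT -> gT} -> bool)
    (T : finType) (l : gT -> T -> T) (r : T -> gT -> T)
  : 'M[rat]_(#|Fclasses S F|) :=
  \matrix_(i, j)
    ((n_orbits l r (class_rep (enum_val i)) (class_rep (enum_val j)))%:R)%R.

From mathcomp Require Import all_boot all_order all_algebra all_fingroup all_solvable.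
Set Implicit Arguments. Unset Strict Implicit. Unset Printing Implicit Defensive.

(* By Burnside's lemma, |P\Omega/Q| |P| |Q| is the number of fixed points of
   the pairs (u, v) in P x Q.  Since Omega is F-generated, a pair (u, v) has a
   fixed point only if v = phi u for a morphism phi of F, and the stability of
   Omega makes the number of fixed points of (u, v), summed over v in Q, depend
   only on the F-class of the cyclic group <[u]>.  Grouping the u in P by that
   class factors the orbit matrix as X Y, with X indexed by (classes, cyclic
   classes) and Y by (cyclic classes, classes).  Restricted to the cyclic
   classes, both X and Y are triangular for the order of the representatives,
   with nonzero diagonal: X because <[u]> <= P, Y because <[u]> is F-conjugate
   into Q, and the diagonal of Y is positive since Omega contains S.  Hence
   the rank is the number of cyclic classes. *)

Import GRing.Theory Num.Theory.

Lemma natr_div_eq0 (R : numFieldType) n k :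
  (0 < k)%N -> (n%:R / k%:R == 0 :> R)%R = (n == 0)%N.
Proof. by move=> k_gt0; rewrite mulf_eq0 invr_eq0 !pnatr_eq0 (gtn_eqF k_gt0) orbF. Qed.

Section MatrixRank.
Local Open Scope ring_scope.
Variable K : fieldType.

Lemma unitmx_weighted_triangular c (M : 'M[K]_c) (w : 'I_c -> nat) :
    (forall i j, M i j != 0 -> i = j \/ (w i < w j)%N) ->
    (forall i, M i i != 0) ->
  M \in unitmx.
Proof.
move=> triM diagM.
have kerM (v : 'rV[K]_c) : v *m M = 0 -> v = 0.
  move=> vM; apply/rowP => j0; rewrite mxE; apply/eqP/negPn/negP => nz.
  (* a nonzero coordinate of minimal weight cannot be cancelled *)
  have [i0 nz0 min0] := @arg_minnP _ j0 (fun i => v 0 i != 0) w nz.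
  have := congr1 (fun A : 'rV[K]_c => A 0 i0) vM.
  rewrite !mxE (bigD1 i0) //= big1 ?addr0 => [/eqP|i ne_i_i0].
    by rewrite mulf_eq0 (negPf nz0) (negPf (diagM i0)).
  have [->|vi] := eqVneq (v 0 i) 0; first by rewrite mul0r.
  have [->|Mi] := eqVneq (M i i0) 0; first by rewrite mulr0.
  case: (triM i i0 Mi) => [e|lt]; first by rewrite e eqxx in ne_i_i0.
  by have := min0 i vi; rewrite leqNgt lt.
rewrite -row_free_unit -kermx_eq0; apply/eqP/row_matrixP => k; rewrite row0.
by apply: kerM; apply/sub_kermxP; apply: row_sub.
Qed.

Lemma mxrank_mxsub m n m' n' (f : 'I_m' -> 'I_m) (g : 'I_n' -> 'I_n)
    (A : 'M[K]_(m, n)) :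
  (\rank (mxsub f g A) <= \rank A)%N.
Proof.
rewrite -[X in mxsub f g X]mulmx1 mxsub_mul; apply: leq_trans (mxrankM_maxl _ _) _.
exact: mxrankS (rowsub_sub _ _).
Qed.

Lemma mxrank_mul_unit_sub m n c (X : 'M[K]_(m, c)) (Y : 'M[K]_(c, n))
    (f : 'I_c -> 'I_m) (g : 'I_c -> 'I_n) :
    rowsub f X \in unitmx -> colsub g Y \in unitmx ->
  \rank (X *m Y) = c.
Proof.
move=> uX uY; apply/eqP.
rewrite eqn_leq (leq_trans (mxrankM_maxl _ _)) ?rank_leq_col //=.
have uXY : rowsub f X *m colsub g Y \in unitmx by rewrite unitmx_mul uX uY.
by rewrite -{1}(mxrank_unit uXY) -mxsub_mul mxrank_mxsub.
Qed.

End MatrixRank.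

Local Open Scope group_scope.

Lemma expg_pair (gT hT : finGroupType) (u : gT) (v : hT) n :
  (u, v) ^+ n = (u ^+ n, v ^+ n).
Proof. by elim: n => [|n IH]; rewrite ?expg0 // !expgS IH. Qed.

Section BisetFixedPoints.
Variables (gT : finGroupType) (S : {group gT}) (T : finType)
  (l : gT -> T -> T) (r : T -> gT -> T).
Hypothesis Hb : biset S l r.

Local Notation bact := (bact l r).

Lemma bact1 x : bact 1 x = x.
Proof. by case: Hb => l1 r1 _ _ _; rewrite /bact /= invg1 r1 l1. Qed.

Lemma bactM g h x : g \in setX S S -> h \in setX S S ->
  bact (g * h) x = bact g (bact h x).
Proof.
case: Hb => _ _ lM rM lr; case: g => g1 g2; case: h => h1 h2.
rewrite !inE /= => /andP[g1S g2S] /andP[h1S h2S].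
by rewrite /bact /= invMg lM // rM ?groupV // lr ?groupV.
Qed.

Lemma bactK g x : g \in setX S S -> bact g^-1 (bact g x) = x.
Proof. by move=> gS; rewrite -bactM ?groupV // mulVg bact1. Qed.

Lemma bactVK g x : g \in setX S S -> bact g (bact g^-1 x) = x.
Proof. by move=> gS; rewrite -bactM ?groupV // mulgV bact1. Qed.

Lemma bactX g n x : g \in setX S S -> bact g x = x -> bact (g ^+ n) x = x.
Proof.
move=> gS gx; elim: n => [|n IH]; first by rewrite expg0 bact1.
by rewrite expgS bactM ?groupX // IH.
Qed.

(* [bact] is a left action; MathComp actions act on the right, hence the
   inverse, and the trivial action outside S x S. *)
Definition bto (x : T) (g : gT * gT) : T :=
  if g \in setX S S then bact g^-1 x else x.

Lemma bto_is_action : is_action (setX S S) bto.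
Proof.
split=> [g x y | x a b aS bS]; rewrite /bto.
  by case: ifP => // gS /(congr1 (bact g)); rewrite !bactVK.
by rewrite groupM // aS bS invMg bactM ?groupV.
Qed.

Definition btoA := Action bto_is_action.

Definition nfix (u v : gT) := #|[set x | bact (u, v) x == x]|.

Lemma orbit_btoA (P Q : {group gT}) : P \subset S -> Q \subset S ->
  orbit btoA (setX P Q) =1 pq_orbit l r P Q.
Proof.
move=> sPS sQS x; have sX := setXS sPS sQS.
apply/setP => y; apply/imsetP/imset2P.
  case=> [[u v]] uv ->; rewrite /= /bto (subsetP sX _ uv).
  by move: uv; rewrite inE /= => /andP[uP vQ]; exists u^-1 v^-1; rewrite ?groupV.
case=> u v uP vQ ->; exists (u^-1, v^-1); first by rewrite inE /= !groupV uP.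
rewrite /= /bto inE /= !groupV (subsetP sPS) ?(subsetP sQS) //=.
by rewrite -[(_, _)^-1]/(u^-1^-1, v^-1^-1) !invgK.
Qed.

Lemma n_orbits_Burnside (P Q : {group gT}) : P \subset S -> Q \subset S ->
  (n_orbits l r P Q * (#|P| * #|Q|))%N = \sum_(u in P) \sum_(v in Q) nfix u v.
Proof.
move=> sPS sQS; have sX := setXS sPS sQS.
have acts : [acts setX P Q, on setT | btoA].
  apply/subsetP => a aX; rewrite !inE; move: (subsetP sX _ aX); rewrite inE => -> /=.
  by apply/subsetP => x _; rewrite !inE.
have -> : n_orbits l r P Q = #|orbit btoA (setX P Q) @: [set: T]|.
  apply: eq_card => X.
  by apply/imsetP/imsetP => -[x _ ->]; exists x; rewrite ?in_setT ?orbit_btoA.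
rewrite -cardsX -(Frobenius_Cauchy acts) pair_big_dep /=.
apply: eq_big => [[u v]|a aX]; first by rewrite inE.
apply: eq_card => x; have aS := subsetP sX _ aX.
rewrite !inE sub1set inE /= /bto aS; case: a aS {aX} => u v aS.
by apply/eqP/eqP => e; rewrite -{1}e ?bactVK ?bactK.
Qed.

Lemma nfix_expX u v k : u \in S -> v \in S -> nfix u v <= nfix (u ^+ k) (v ^+ k).
Proof.
move=> uS vS; apply/subset_leq_card/subsetP => x; rewrite !inE => /eqP ux.
by rewrite -expg_pair bactX // inE uS.
Qed.

Lemma nfix_diag_gt0 u : contains_regular l r S -> u \in S -> 0 < nfix u u.
Proof.
case=> iota [_ iotaM] uS; rewrite card_gt0; apply/set0Pn; exists (iota 1).
by rewrite inE /bact /= -iotaM ?groupV // mulg1 mulgV.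
Qed.

Variable F : {set gT} -> {ffun gT -> gT} -> bool.

Lemma nfix_Fstable (P Q : {group gT}) phi chi u v :
    Fstable l r S F -> F P phi -> F Q chi -> u \in P -> v \in Q ->
  nfix u v = nfix (phi u) (chi v).
Proof.
move=> Hst FP FQ uP vQ.
have sR : <[(u, v)]>%G \subset setX P Q by rewrite cycle_subG inE uP.
have [beta [bb Hbeta]] := Hst _ _ _ _ FP FQ _ sR.
have uvR : (u, v) \in <[(u, v)]>%G by rewrite cycle_id.
rewrite /nfix -(card_imset _ (bij_inj bb)); apply: eq_card => y.
rewrite inE; apply/imsetP/eqP.
  by case=> x; rewrite inE => /eqP xf ->; rewrite -[in RHS]xf (Hbeta (u, v)).
move=> yf; case: bb => binv bK Kb; exists (binv y); last by rewrite Kb.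
by rewrite inE; apply/eqP/(can_inj bK); rewrite (Hbeta (u, v)) // Kb yf.
Qed.

Section Generated.
Hypothesis Hg : Fgenerated l r S F.

Lemma nfix_eq_graph u v v' x : u \in S -> v \in S -> v' \in S ->
  bact (u, v) x = x -> bact (u, v') x = x -> v = v'.
Proof.
move=> uS vS v'S f1 f2; have [P [phi [_ E]]] := Hg x.
have : (u, v) \in isotropy l r S x by rewrite !inE /= uS vS f1 eqxx.
have : (u, v') \in isotropy l r S x by rewrite !inE /= uS v'S f2 eqxx.
by rewrite E => /imsetP[w1 _ [-> ->]] /imsetP[w2 _ [-> ->]].
Qed.

Lemma nfix_gt0_Fmorphism u v : u \in S -> v \in S -> 0 < nfix u v ->
  exists (P : {group gT}) phi, [/\ F P phi, u \in P & phi u = v].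
Proof.
move=> uS vS; rewrite card_gt0 => /set0Pn[x]; rewrite inE => /eqP ux.
have [P [phi [FP E]]] := Hg x.
have : (u, v) \in isotropy l r S x by rewrite !inE /= uS vS ux eqxx.
by rewrite E => /imsetP[w wP [-> ->]]; exists P, phi.
Qed.

End Generated.
End BisetFixedPoints.

Section FusionConjugacy.
Variables (gT : finGroupType) (S : {group gT}).
Variable F : {set gT} -> {ffun gT -> gT} -> bool.
Hypothesis HF : fusion_system S F.

Lemma Fmorphism P f : F P f ->
  [/\ subgrp S P, {in P &, {morph f : x y / x * y}},
      {in P &, injective f} & f @: P \subset S].
Proof. by case: HF => [H _ _ _]; apply: H. Qed.

Lemma Fconjg P s : subgrp S P -> s \in S -> F P [ffun x => x ^ s].
Proof. by case: HF => [_ _ H _]; apply: H. Qed.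

Lemma Fres P Q f : F P f -> subgrp P Q -> F Q f.
Proof. by case: HF => [_ _ _ [H _ _]]; apply: H. Qed.

Lemma Fcomp P f (g : {ffun gT -> gT}) :
  F P f -> F (f @: P) g -> F P [ffun x => g (f x)].
Proof. by case: HF => [_ _ _ [_ H _]]; apply: H. Qed.

Lemma Finv P f (g : {ffun gT -> gT}) :
  F P f -> {in P, forall x, g (f x) = x} -> F (f @: P) g.
Proof. by case: HF => [_ _ _ [_ _ H]]; apply: H. Qed.

Lemma Fid (P : {group gT}) : P \subset S -> F P [ffun x => x ^ 1].
Proof. by move=> sPS; apply: Fconjg; rewrite ?group1 // /subgrp groupP. Qed.

Lemma Fmorphism1 (P : {group gT}) f : F P f -> f 1 = 1.
Proof.
by case/Fmorphism => _ fM _ _; apply: (mulgI (f 1)); rewrite -fM ?group1 // !mulg1.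
Qed.

Lemma FmorphismX (P : {group gT}) f x n : F P f -> x \in P -> f (x ^+ n) = f x ^+ n.
Proof.
move=> FP xP; have [_ fM _ _] := Fmorphism FP.
elim: n => [|n IH]; first by rewrite !expg0 (Fmorphism1 FP).
by rewrite !expgS fM ?groupX // IH.
Qed.

Lemma Fmorphism_cycle (P : {group gT}) f u : F P f -> u \in P ->
  f @: <[u]> = <[f u]>.
Proof.
move=> FP uP; apply/setP => y; apply/imsetP/cycleP.
  by case=> x /cycleP[k ->] ->; exists k; rewrite (FmorphismX _ FP).
by case=> k ->; exists (u ^+ k); rewrite ?mem_cycle // (FmorphismX _ FP).
Qed.

Lemma Fres_cycle (P : {group gT}) f u : F P f -> u \in P -> F <[u]> f.
Proof. by move=> FP uP; apply: Fres FP _; rewrite /subgrp groupP cycle_subG. Qed.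

Definition finv (P : {set gT}) (f : {ffun gT -> gT}) : {ffun gT -> gT} :=
  [ffun y => odflt y [pick x in P | f x == y]].

Lemma finvK P f : F P f -> {in P, forall x, finv P f (f x) = x}.
Proof.
move=> FP x xP; have [_ _ fI _] := Fmorphism FP; rewrite ffunE.
case: pickP => [x' /andP[x'P /eqP] | /(_ x)]; last by rewrite xP eqxx.
exact: fI.
Qed.

Lemma Fconj_refl P : subgrp S P -> Fconj F P P.
Proof.
case/andP => gP sPS; apply/existsP; exists [ffun x => x ^ 1].
rewrite (@Fid (Group gP)) //=; apply/eqP/setP => y.
by apply/imsetP/idP => [[x xP ->]|yP]; [|exists y]; rewrite ?ffunE ?conjg1.
Qed.

Lemma Fconj_sym P Q : Fconj F P Q -> Fconj F Q P.
Proof.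
case/existsP => f /andP[FP /eqP <-]; apply/existsP; exists (finv P f).
rewrite (Finv FP (finvK FP)) /=; apply/eqP; rewrite -imset_comp.
apply/setP => y; apply/imsetP/idP => [[x xP ->]|yP]; first by rewrite /= finvK.
by exists y; rewrite //= finvK.
Qed.

Lemma Fconj_trans P Q R : Fconj F P Q -> Fconj F Q R -> Fconj F P R.
Proof.
case/existsP => f /andP[FP /eqP e]; case/existsP => g /andP[FQ /eqP <-].
apply/existsP; exists [ffun x => g (f x)]; rewrite Fcomp ?e //=.
by apply/eqP; rewrite -e -imset_comp; apply: eq_imset => x; rewrite ffunE.
Qed.

Lemma Fconj_card P Q : Fconj F P Q -> #|P| = #|Q|.
Proof.
case/existsP => f /andP[FP /eqP <-]; have [_ _ fI _] := Fmorphism FP.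
by rewrite card_in_imset.
Qed.

Lemma Fconj_subgrp P Q : Fconj F P Q -> subgrp S P && subgrp S Q.
Proof.
case/existsP => f /andP[FP /eqP <-]; have [sP fM _ fS] := Fmorphism FP.
rewrite sP /subgrp fS andbT; case/andP: sP => gP _; pose G := Group gP.
rewrite -[P]/(gval G); apply/group_setP; split.
  by apply/imsetP; exists 1; rewrite ?group1 // (@Fmorphism1 G f FP).
move=> _ _ /imsetP[x xP ->] /imsetP[y yP ->].
by apply/imsetP; exists (x * y); rewrite ?groupM // fM.
Qed.

Lemma Fconj_cyclic P Q : Fconj F P Q -> cyclic P -> cyclic Q.
Proof.
move=> PQ; case/andP: (Fconj_subgrp PQ) => /andP[gP _] _; pose G := Group gP.
case/existsP: PQ => f /andP[FP /eqP <-] /cyclicP[u eG]; apply/cyclicP.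
have uG : u \in G by rewrite /= eG cycle_id.
by exists (f u); rewrite eG -(@Fmorphism_cycle G) // -eG.
Qed.

Lemma Fclass_self P : subgrp S P -> P \in Fclass S F P.
Proof. by move=> sP; rewrite inE sP Fconj_refl. Qed.

Lemma Fclass_eq P Q : Q \in Fclass S F P -> Fclass S F P = Fclass S F Q.
Proof.
rewrite inE => /andP[_ PQ]; apply/setP => X; rewrite !inE.
case: (subgrp S X) => //=; apply/idP/idP => [PX|QX].
  exact: Fconj_trans (Fconj_sym PQ) PX.
exact: Fconj_trans PQ QX.
Qed.

Lemma class_rep_mem C : C \in Fclasses S F -> class_rep C \in C.
Proof.
case/imsetP => P; rewrite inE => sP ->; rewrite /class_rep.
by case: pickP => [X -> // | /(_ P)]; rewrite Fclass_self.
Qed.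

Lemma Fclasses_inj C1 C2 X : C1 \in Fclasses S F -> C2 \in Fclasses S F ->
  X \in C1 -> X \in C2 -> C1 = C2.
Proof. by case/imsetP => P1 _ -> /imsetP[P2 _ ->] /Fclass_eq -> /Fclass_eq ->. Qed.

Lemma Fclasses_conj C X Y : C \in Fclasses S F -> X \in C -> Y \in C -> Fconj F X Y.
Proof. by case/imsetP => P _ -> XC; rewrite (Fclass_eq XC) inE => /andP[]. Qed.

Lemma Fclasses_subgrp C X : C \in Fclasses S F -> X \in C -> subgrp S X.
Proof. by case/imsetP => P _ ->; rewrite inE => /andP[]. Qed.

Lemma Fclasses_closed C X Y : C \in Fclasses S F -> X \in C -> subgrp S Y ->
  Fconj F X Y -> Y \in C.
Proof. by case/imsetP => P _ -> XC sY XY; rewrite (Fclass_eq XC) inE sY. Qed.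

Lemma class_rep_card C : C \in Fclasses S F -> 0 < #|class_rep C|.
Proof.
move=> CF; case/andP: (Fclasses_subgrp CF (class_rep_mem CF)) => gR _.
by rewrite card_gt0; apply/set0Pn; exists 1; apply: (@group1 _ (Group gR)).
Qed.

Lemma Fclasses_cyclicP C : C \in Fclasses_cyclic S F ->
  C \in Fclasses S F /\ cyclic (class_rep C).
Proof.
case/imsetP => P; rewrite inE => /andP[sP cP] eC.
have CF : C \in Fclasses S F by rewrite eC; apply: imset_f; rewrite inE.
split=> //; move: (class_rep_mem CF); rewrite {2}eC inE => /andP[_].
by move/Fconj_cyclic; apply.
Qed.

Lemma Fclass_cycle u : u \in S ->
  Fclass S F <[u]> \in Fclasses_cyclic S F /\ <[u]> \in Fclass S F <[u]>.
Proof.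
move=> uS; have sU : subgrp S <[u]> by rewrite /subgrp groupP cycle_subG.
by split; [apply: imset_f; rewrite inE sU cycle_cyclic | apply: Fclass_self].
Qed.

Lemma Fclasses_sub_rep E D Y : E \in Fclasses S F -> D \in Fclasses S F ->
  Y \in E -> Y \subset class_rep D -> E = D \/ #|class_rep E| < #|class_rep D|.
Proof.
move=> EF DF YE sYD.
have cE : #|class_rep E| = #|Y| by apply/Fconj_card/(Fclasses_conj EF)/YE/class_rep_mem.
case: (ltngtP #|class_rep E| #|class_rep D|) => [lt|gt|eqED]; first by right.
  by move: (subset_leq_card sYD); rewrite -cE leqNgt gt.
left; apply: (Fclasses_inj EF DF YE); suff -> : Y = class_rep D by exact: class_rep_mem.
by apply/eqP; rewrite eqEcard sYD -cE eqED leqnn.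
Qed.

End FusionConjugacy.

Section OrbitMatrix.
Variables (gT : finGroupType) (S : {group gT}) (T : finType)
  (l : gT -> T -> T) (r : T -> gT -> T).
Variable F : {set gT} -> {ffun gT -> gT} -> bool.
Hypothesis Hb : biset S l r.
Hypothesis HF : fusion_system S F.
Hypothesis Hst : Fstable l r S F.
Hypothesis Hg : Fgenerated l r S F.
Hypothesis Hreg : contains_regular l r S.

Local Notation nfix := (nfix l r).

Definition fixsum u (Q : {set gT}) := \sum_(v in Q) nfix u v.

Lemma fixsum_cycle_le a b (Q : {group gT}) : a \in S -> b \in S -> Q \subset S ->
  a \in <[b]> -> b \in <[a]> -> fixsum a Q <= fixsum b Q.
Proof.
move=> aS bS sQS /cycleP[k' ak'] /cycleP[k bk].
have aK : a ^+ (k * k') = a by rewrite expgM -bk -ak'.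
pose A := [set v in Q | 0 < nfix a v].
have sAQ : A \subset Q by apply/subsetP => v; rewrite inE => /andP[].
have -> : fixsum a Q = \sum_(v in A) nfix a v.
  rewrite /fixsum (bigID (fun v => 0 < nfix a v)) /= [X in _ + X]big1 ?addn0.
    by apply: eq_bigl => v; rewrite inE.
  by move=> v /andP[_]; rewrite lt0n negbK => /eqP.
(* v |-> v ^+ k is injective on A: a fixed point of (a, v) is also fixed by
   (a ^+ (k k'), v ^+ (k k')) = (a, v ^+ (k k')), so v ^+ (k k') = v. *)
have vK v : v \in A -> v ^+ (k * k') = v.
  rewrite inE => /andP[vQ]; rewrite card_gt0 => /set0Pn[x].
  rewrite inE => /eqP ax; have vS := subsetP sQS v vQ.
  apply/esym/(nfix_eq_graph Hg aS vS (groupX _ vS) ax).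
  by rewrite -{1}aK -expg_pair (bactX Hb) // inE aS.
have injA : {in A &, injective (fun v => v ^+ k)}.
  by move=> v w vA wA /= e; rewrite -(vK v vA) -(vK w wA) !expgM e.
apply: (@leq_trans (\sum_(v in A) nfix b (v ^+ k))).
  apply: leq_sum => v vA; rewrite bk; apply: (nfix_expX Hb k aS).
  exact: subsetP sQS _ (subsetP sAQ _ vA).
have sAkQ : [set v ^+ k | v in A] \subset Q.
  by apply/subsetP => _ /imsetP[v vA ->]; apply/groupX/(subsetP sAQ).
rewrite -(big_imset (fun v => nfix b v) injA) /=.
by rewrite [leqRHS](big_setID [set v ^+ k | v in A]) /= (setIidPr sAkQ) leq_addr.
Qed.

Lemma fixsum_cycle_eq a b (Q : {group gT}) : a \in S -> b \in S -> Q \subset S ->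
  <[a]> = <[b]> -> fixsum a Q = fixsum b Q.
Proof.
move=> aS bS sQS e.
by apply/eqP; rewrite eqn_leq !fixsum_cycle_le // ?e ?cycle_id // -?e ?cycle_id.
Qed.

Lemma fixsum_Fconj u w (Q : {group gT}) : u \in S -> w \in S -> Q \subset S ->
  Fconj F <[u]> <[w]> -> fixsum u Q = fixsum w Q.
Proof.
move=> uS wS sQS /existsP[phi /andP[Fphi /eqP e]].
have uU : u \in <[u]>%G by rewrite cycle_id.
have -> : fixsum u Q = fixsum (phi u) Q.
  apply: eq_bigr => v vQ.
  by rewrite (nfix_Fstable Hst (P := <[u]>%G) Fphi (Fid HF sQS) uU vQ) ffunE conjg1.
have [_ _ _ phiS] := Fmorphism HF Fphi.
apply: fixsum_cycle_eq => //; first by apply/(subsetP phiS)/imset_f.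
by rewrite -(@Fmorphism_cycle _ S F HF <[u]>%G) // e.
Qed.

Definition cgen (E : {set {set gT}}) : gT :=
  odflt 1 [pick g | <[g]> == class_rep E].

Lemma cgen_spec E : E \in Fclasses_cyclic S F ->
  <[cgen E]> = class_rep E /\ cgen E \in S.
Proof.
move=> EC; have [EF /cyclicP[g eg]] := Fclasses_cyclicP HF EC.
have /andP[_ sR] := Fclasses_subgrp EF (class_rep_mem HF EF).
rewrite /cgen; case: pickP => [g' /eqP e | /(_ g)]; last by rewrite eg eqxx.
by split=> //; rewrite -cycle_subG e.
Qed.

Lemma fixsum_Fclass_cycle u (Q : {group gT}) : u \in S -> Q \subset S ->
  fixsum u Q = fixsum (cgen (Fclass S F <[u]>)) Q.
Proof.
move=> uS sQS; have [cyc uC] := Fclass_cycle HF uS.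
have [CF _] := Fclasses_cyclicP HF cyc; have [eR gS] := cgen_spec cyc.
apply: fixsum_Fconj => //; apply: (Fclasses_conj HF CF uC).
by rewrite eR (class_rep_mem HF CF).
Qed.

Lemma n_orbits_cyclic_classes (P Q : {group gT}) : P \subset S -> Q \subset S ->
  (n_orbits l r P Q * (#|P| * #|Q|))%N =
  \sum_(E in Fclasses_cyclic S F) #|[set u in P | <[u]> \in E]| * fixsum (cgen E) Q.
Proof.
move=> sPS sQS; rewrite (n_orbits_Burnside Hb sPS sQS).
have classE u : u \in P -> fixsum u Q =
    \sum_(E | (E \in Fclasses_cyclic S F) && (<[u]> \in E)) fixsum (cgen E) Q.
  move=> uP; have uS := subsetP sPS _ uP; have [cyc uC] := Fclass_cycle HF uS.
  rewrite (big_pred1 (Fclass S F <[u]>)) => [|E /=]; first exact: fixsum_Fclass_cycle.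
  apply/andP/eqP => [[EC uE]|->] //.
  have [EF _] := Fclasses_cyclicP HF EC; have [CF _] := Fclasses_cyclicP HF cyc.
  by apply: (Fclasses_inj HF EF CF uE); exact: uC.
rewrite (eq_bigr _ classE) (exchange_big_dep (mem (Fclasses_cyclic S F))) /=.
  apply: eq_bigr => E EC; rewrite -sum_nat_const; apply: eq_bigl => u.
  by rewrite !inE EC.
by move=> u E _ /andP[].
Qed.

Definition cycle_class_mx : 'M[rat]_(#|Fclasses S F|, #|Fclasses_cyclic S F|) :=
  \matrix_(i, E) ((#|[set u in class_rep (enum_val i) |
                      <[u]> \in (enum_val E : {set {set gT}})]|)%:R
                  / #|class_rep (enum_val i)|%:R)%R.

Definition fixsum_mx : 'M[rat]_(#|Fclasses_cyclic S F|, #|Fclasses S F|) :=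
  \matrix_(E, j) ((fixsum (cgen (enum_val E)) (class_rep (enum_val j)))%:R
                  / #|class_rep (enum_val j)|%:R)%R.

Lemma orbit_matrix_factor : orbit_matrix S F l r = (cycle_class_mx *m fixsum_mx)%R.
Proof.
apply/matrixP => i j; rewrite !mxE.
set P := class_rep (enum_val i); set Q := class_rep (enum_val j).
have iF := enum_valP i; have jF := enum_valP j.
have /andP[gP sPS] := Fclasses_subgrp iF (class_rep_mem HF iF).
have /andP[gQ sQS] := Fclasses_subgrp jF (class_rep_mem HF jF).
have orbE := @n_orbits_cyclic_classes (Group gP) (Group gQ) sPS sQS.
have -> : (\sum_E cycle_class_mx i E * fixsum_mx E j =
   (\sum_(E in Fclasses_cyclic S F)
      (#|[set u in P | <[u]> \in E]| * fixsum (cgen E) Q)%:R) / (#|P|%:R * #|Q|%:R))%R.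
  rewrite [in RHS]big_enum_val mulr_suml; apply: eq_bigr => E _.
  by rewrite !mxE natrM invfM mulrACA.
by rewrite -natr_sum -orbE !natrM mulfK // mulf_neq0 // pnatr_eq0 -lt0n cardG_gt0.
Qed.

Lemma cycle_class_count_gt0 C : C \in Fclasses_cyclic S F ->
  0 < #|[set u in class_rep C | <[u]> \in C]|.
Proof.
move=> CC; have [CF _] := Fclasses_cyclicP HF CC; have [eR _] := cgen_spec CC.
rewrite card_gt0; apply/set0Pn; exists (cgen C).
by rewrite inE -{1}eR cycle_id eR (class_rep_mem HF CF).
Qed.

Lemma cycle_class_count_triangular C E :
    C \in Fclasses_cyclic S F -> E \in Fclasses_cyclic S F ->
    0 < #|[set u in class_rep C | <[u]> \in E]| ->
  E = C \/ #|class_rep E| < #|class_rep C|.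
Proof.
move=> CC EC; rewrite card_gt0 => /set0Pn[u]; rewrite inE => /andP[uR uE].
have [CF _] := Fclasses_cyclicP HF CC; have [EF _] := Fclasses_cyclicP HF EC.
have /andP[gR _] := Fclasses_subgrp CF (class_rep_mem HF CF).
apply: (Fclasses_sub_rep HF EF CF uE).
by rewrite -[class_rep C]/(gval (Group gR)) cycle_subG.
Qed.

Lemma fixsum_cgen_gt0 D : D \in Fclasses_cyclic S F ->
  0 < fixsum (cgen D) (class_rep D).
Proof.
move=> DC; have [eR gS] := cgen_spec DC.
have gR : cgen D \in class_rep D by rewrite -eR cycle_id.
by rewrite /fixsum (bigD1 (cgen D)) //= (leq_trans (nfix_diag_gt0 Hreg gS)) ?leq_addr.
Qed.

(* Fixed points of (cgen E, v) exist only if v = phi (cgen E) for a morphism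
   phi of F, which makes <[v]> <= class_rep D a member of E. *)
Lemma fixsum_cgen_triangular E D :
    E \in Fclasses_cyclic S F -> D \in Fclasses_cyclic S F ->
    0 < fixsum (cgen E) (class_rep D) ->
  E = D \/ #|class_rep E| < #|class_rep D|.
Proof.
move=> EC DC; rewrite lt0n sum_nat_eq0 negb_forall => /existsP[v].
rewrite negb_imply -lt0n => /andP[vR fixv].
have [DF _] := Fclasses_cyclicP HF DC; have [EF _] := Fclasses_cyclicP HF EC.
have /andP[gR sRS] := Fclasses_subgrp DF (class_rep_mem HF DF).
have [eR gS] := cgen_spec EC.
have [P [phi [FP gP ev]]] := nfix_gt0_Fmorphism Hg gS (subsetP sRS v vR) fixv.
subst v.
have Fc := Fres_cycle HF FP gP.
have ER : Fconj F (class_rep E) <[phi (cgen E)]>.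
  apply/existsP; exists phi; rewrite -eR Fc /=.
  by rewrite (@Fmorphism_cycle _ S F HF <[cgen E]>%G) ?cycle_id.
have sVR : <[phi (cgen E)]> \subset class_rep D.
  by rewrite -[class_rep D]/(gval (Group gR)) cycle_subG.
apply: (Fclasses_sub_rep HF EF DF _ sVR).
apply: (Fclasses_closed HF EF (class_rep_mem HF EF) _ ER).
by rewrite /subgrp groupP (subset_trans sVR).
Qed.

Lemma Fclass_S_mem : Fclass S F S \in Fclasses S F.
Proof. by apply: imset_f; rewrite inE /subgrp groupP subxx. Qed.

Definition cyclic_index (E : 'I_#|Fclasses_cyclic S F|) : 'I_#|Fclasses S F| :=
  enum_rank_in Fclass_S_mem (enum_val E).

Lemma cyclic_indexK E : enum_val (cyclic_index E) = enum_val E.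
Proof.
by rewrite /cyclic_index enum_rankK_in //; case: (Fclasses_cyclicP HF (enum_valP E)).
Qed.

Lemma cyclic_index_card E : (0 < #|class_rep (enum_val (cyclic_index E))|)%N.
Proof.
rewrite cyclic_indexK.
by case: (Fclasses_cyclicP HF (enum_valP E)) => /(class_rep_card HF).
Qed.

Lemma unitmx_cycle_class_sub : rowsub cyclic_index cycle_class_mx \in unitmx.
Proof.
rewrite -unitmx_tr.
apply: (unitmx_weighted_triangular (w := fun E => #|class_rep (enum_val E)|)).
  move=> E C; rewrite !mxE natr_div_eq0 ?cyclic_index_card // -lt0n cyclic_indexK.
  case/(cycle_class_count_triangular (enum_valP C) (enum_valP E)) => [/enum_val_inj|];
    by auto.
move=> E; rewrite !mxE natr_div_eq0 ?cyclic_index_card // -lt0n cyclic_indexK.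
exact: cycle_class_count_gt0 (enum_valP E).
Qed.

Lemma unitmx_fixsum_sub : colsub cyclic_index fixsum_mx \in unitmx.
Proof.
apply: (unitmx_weighted_triangular (w := fun E => #|class_rep (enum_val E)|)).
  move=> E D; rewrite !mxE natr_div_eq0 ?cyclic_index_card // -lt0n cyclic_indexK.
  case/(fixsum_cgen_triangular (enum_valP E) (enum_valP D)) => [/enum_val_inj|];
    by auto.
move=> E; rewrite !mxE natr_div_eq0 ?cyclic_index_card // -lt0n cyclic_indexK.
exact: fixsum_cgen_gt0 (enum_valP E).
Qed.

End OrbitMatrix.

Theorem proposition3p1 (p : nat) (gT : finGroupType) (S : {group gT})
    (F : {set gT} -> {ffun gT -> gT} -> bool)
    (T : finType) (l : gT -> T -> T) (r : T -> gT -> T) :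
  prime p -> (p.-group S)%g -> saturated p S F ->
  biset S l r -> Fstable l r S F -> Fgenerated l r S F ->
  contains_regular l r S ->
  \rank (orbit_matrix S F l r) = #|Fclasses_cyclic S F|.
Proof.
move=> _ _ [HF _] Hb Hst Hg Hreg.
rewrite (orbit_matrix_factor Hb HF Hst Hg).
exact: mxrank_mul_unit_sub (unitmx_cycle_class_sub HF) (unitmx_fixsum_sub HF Hg Hreg).
Qed.
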